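(* For all integers $r>0$, $d\ge 0$, $j\ge 0$, we have $\widetilde{A}_{r,d}(j) = A_{r,d}(j)$.
   Context: For integers $r>0$, $d\ge 0$, $j$: let $\Theta_{r,d}(j)$ be the set of tuples $\vec k=(k_1,\dots,k_l)\in\mathbb{Z}^l$ (with $l\ge 0$ arbitrary) such that $0\le k_i\le r$ for all $i$, $\sum_i k_i = rd$, and $\sum_i i\,k_i = j + rd(d+1)/2$; and set $\widetilde{A}_{r,d}(j)\coloneqq \sum_{\vec k\in\Theta_{r,d}(j)} \prod_{i=1}^l \binom{r}{k_i}$. For a Young diagram $Y$, $|Y|$ is its number of boxes and $c(Y)$ its number of columns; for an $r$-tuple $\vec Y=(Y_1,\dots,Y_r)$, $|\vec Y|=\sum_\alpha |Y_\alpha|$; for $\vec m=(m_1,\dots,m_r)\in\mathbb{Z}^r$, $(\vec m,\vec m)\coloneqq \frac{1}{2r}\sum_{\alpha,\beta=1}^r (m_\alpha-m_\beta)^2$. Then $A_{r,d}(j)$ is the number of $r$-tuples $(m_\alpha, Y_\alpha)_{\alpha=1}^r$ with $m_\alpha\in\mathbb{Z}_{\ge 0}$, $\sum_\alpha m_\alpha = rd$, each $Y_\alpha$ a Young diagram with $c(Y_\alpha)\le m_\alpha$, and $|\vec Y| + (\vec m,\vec m)/2 = j$. *)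

From mathcomp Require Import all_boot all_order all_algebra.
Set Implicit Arguments. Unset Strict Implicit. Unset Printing Implicit Defensive.
Import Order.TTheory GRing.Theory Num.Theory.

(* bseqs L B : every sequence of naturals of length <= L with entries <= B
   (used only as a finite ambient universe; all the objects counted below
   provably lie in it). *)
Fixpoint bseqs (L B : nat) : seq (seq nat) :=
  match L with
  | 0 => [:: [::]]
  | L'.+1 => [::] :: [seq x :: s | x <- iota 0 B.+1, s <- bseqs L' B]
  end.

Definition tri (r d : nat) : nat := (r * d * d.+1) %/ 2.

(* Theta_{r,d}(j): tuples (k_1,..,k_l), taken without trailing zeros
   (the last entry, if any, is nonzero). Index i in the paper = i.+1 here. *)
Definition in_Theta (r d j : nat) (k : seq nat) : bool :=
  [&& all (fun x => x <= r) k,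
      sumn k == r * d,
      \sum_(i < size k) i.+1 * nth 0 k i == j + tri r d
    & last 1 k != 0].

Definition Atilde (r d j : nat) : nat :=
  \sum_(k : seq_sub (bseqs (j + tri r d) r) | in_Theta r d j (val k))
     \prod_(x <- val k) 'C(r, x).

(* Young diagram, encoded by its row lengths (a partition). *)
Definition young (Y : seq nat) : bool := sorted geq Y && all (leq 1) Y.
Definition ysize (Y : seq nat) : nat := sumn Y.
Definition ncols (Y : seq nat) : nat := head 0 Y.

Definition mpair (r : nat) (m : 'I_r -> nat) : rat :=
  (((2 * r)%N%:R)^-1 * \sum_(a < r) \sum_(b < r) ((m a)%:R - (m b)%:R) ^+ 2)%R.

Definition A_pred (r d j : nat) (m : 'I_r -> nat) (Y : 'I_r -> seq nat) : bool :=
  [&& \sum_(a < r) m a == r * d,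
      [forall a, young (Y a) && (ncols (Y a) <= m a)]
    & ((\sum_(a < r) ysize (Y a))%N%:R + mpair m / 2%:R == j%:R :> rat)%R].

(* A_{r,d}(j): number of r-tuples (m_a, Y_a); m_a <= rd and |Y_a| <= j, so
   m ranges over 'I_(rd+1) and each Y_a over sequences of length <= j
   with entries <= j. *)
Definition A (r d j : nat) : nat :=
  #|[pred p : {ffun 'I_r -> 'I_(r * d).+1} * {ffun 'I_r -> seq_sub (bseqs j j)}
     | @A_pred r d j (fun a => val (p.1 a)) (fun a => val (p.2 a))]|.

(* Both sides are coefficients of x^(rd) q^(j + rd(d+1)/2) in r-th powers of
   bivariate series.  A sequence k contributes x^(sum k) q^(sum i k_i) prod C(r, k_i),
   so Atilde is read off prod_(i=1..L) (1 + x q^i)^r for L = j + rd(d+1)/2.  By the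
   q-binomial theorem prod_(i=1..L) (1 + x q^i) = sum_a x^a q^(a(a+1)/2) [L, a]_q, and
   [L, a]_q counts Young diagrams in an (L-a) x a box, so up to q-degree j it agrees
   with the series of all diagrams with at most a columns.  On the other side, when
   sum m_a = rd one has (m,m)/2 = sum_a m_a(m_a+1)/2 - rd(d+1)/2, so A is read off the
   r-th power of sum_(m <= rd) x^m q^(m(m+1)/2) sum_(c(Y) <= m) q^|Y|.  Since
   m(m+1)/2 - dm >= d(d+1)/2 - d^2, every monomial x^a q^b (a <= rd) of both series has
   b - da >= d(d+1)/2 - d^2, and of their difference b - da > j + d(d+1)/2 - d^2.
   Factoring U^r - V^r = (U - V) sum_i U^(r-1-i) V^i, every monomial of the difference
   of the r-th powers has b - da > j + r(d(d+1)/2 - d^2), which is exactly the weight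
   of the coefficient in question. *)

From mathcomp Require Import all_boot all_order all_algebra.
From mathcomp Require Import zify ring lra.
Import Order.TTheory GRing.Theory Num.Theory.
Set Implicit Arguments. Unset Strict Implicit. Unset Printing Implicit Defensive.

Lemma bseqsS L B :
  bseqs L.+1 B = [::] :: [seq x :: s | x <- iota 0 B.+1, s <- bseqs L B].
Proof. by []. Qed.

Lemma mem_bseqs L B s :
  (s \in bseqs L B) = (size s <= L) && all (fun x => x <= B) s.
Proof.
elim: L s => [|L IHL] [|x s] //; rewrite bseqsS in_cons orFb [RHS]/= ltnS.
apply/allpairsPdep/and3P => [[x' [s' [+ + [-> ->]]]]|[size_s x_le all_s]].
  by rewrite mem_iota add0n ltnS IHL => ? /andP[].
by exists x, s; rewrite mem_iota add0n ltnS IHL size_s x_le all_s.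
Qed.

Lemma uniq_bseqs L B : uniq (bseqs L B).
Proof.
elim: L => [|L IHL] //; rewrite bseqsS cons_uniq allpairs_uniq ?iota_uniq //.
- by rewrite andbT; apply/negP => /allpairsPdep[x [s []]].
- by move=> [x1 s1] [x2 s2] _ _ [-> ->].
Qed.

Lemma bseqs_nil L B : bseqs L B = [::] :: behead (bseqs L B).
Proof. by case: L. Qed.

Lemma nil_notin_behead_bseqs L B : [::] \notin behead (bseqs L B).
Proof. by have := uniq_bseqs L B; rewrite [in uniq _]bseqs_nil cons_uniq => /andP[]. Qed.

Lemma big_bseqsS (R : nmodType) L B (F : seq nat -> R) :
  (\sum_(s <- bseqs L.+1 B) F s =
   F [::] + \sum_(x < B.+1) \sum_(s <- bseqs L B) F ((x : nat) :: s))%R.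
Proof.
by rewrite bseqsS big_cons big_allpairs_dep -{1}(subn0 B.+1) -/(index_iota 0 B.+1) big_mkord.
Qed.

Lemma sum_seq_sub (R : nmodType) (s : seq (seq nat)) (P : pred (seq nat))
    (F : seq nat -> R) : uniq s ->
  (\sum_(x : seq_sub s | P (val x)) F (val x) = \sum_(y <- s | P y) F y)%R.
Proof.
move=> s_uniq; rewrite -[in RHS](_ : map val (enum {: seq_sub s}) = s).
  by rewrite big_map big_enum_cond; apply: eq_bigl => x; rewrite inE.
by rewrite enumT unlock val_seq_sub_enum.
Qed.

Lemma eq_from_succ (T : Type) (f : nat -> T) k :
  (forall n, k <= n -> f n.+1 = f n) -> forall n, k <= n -> f n = f k.
Proof.
move=> fS n /subnK <-; elim: (n - k) => // i IHi.
by rewrite addSn fS ?IHi // leq_addl.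
Qed.

Definition triangle a := 'C(a.+1, 2).
Arguments triangle : simpl never.

Lemma triangleS a : triangle a.+1 = triangle a + a.+1.
Proof. by rewrite /triangle binS bin1. Qed.

Lemma triangle_double a : triangle a * 2 = a * a.+1.
Proof. by elim: a => [|a IHa] //; rewrite triangleS mulnDl IHa; lia. Qed.

Lemma leq_triangle n : n <= triangle n.
Proof. by elim: n => [|n IHn] //; rewrite triangleS; lia. Qed.

Lemma triangle_convex a d : triangle d + d * a <= triangle a + d * d.
Proof.
have := triangle_double a; have := triangle_double d.
move: (triangle a) (triangle d) => ta td Hd Ha.
case: (leqP d a) => [/subnK | /ltnW /subnK] Hda.
  by move: Ha; rewrite -Hda; move: (a - d) => k; nia.
by move: Hd; rewrite -Hda; move: (d - a) => k; nia.
Qed.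

Lemma tri_triangle r d : tri r d = r * triangle d.
Proof. by rewrite /tri -mulnA -triangle_double mulnA mulnK. Qed.

Lemma young_cons x s : young (x :: s) = [&& 0 < x, ncols s <= x & young s].
Proof.
rewrite /young /=; case: s => [|y s] /=; first by rewrite andbT.
by case: (y <= x); case: (path geq y s); case: (0 < x).
Qed.

Lemma last_cons_neq0 x s : x != 0 -> (last 1 (x :: s) != 0) = (last 1 s != 0).
Proof. by case: s. Qed.

Definition weighted_sum (s : seq nat) := \sum_(i < size s) i.+1 * nth 0 s i.

Lemma weighted_sum_nil : weighted_sum [::] = 0.
Proof. by rewrite /weighted_sum big_ord0. Qed.

Lemma weighted_sum_cons x s : weighted_sum (x :: s) = x + weighted_sum s + sumn s.
Proof.
rewrite /weighted_sum /= big_ord_recl /= mul1n -addnA; congr (_ + _).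
rewrite sumnE (big_nth 0) big_mkord -big_split /=; apply: eq_bigr => i _.
by rewrite /bump /= add1n mulSn addnC.
Qed.

Local Open Scope ring_scope.

Definition young_gf h B m : {poly int} :=
  \sum_(Y <- bseqs h B | young Y && (ncols Y <= m)%N) 'X^(ysize Y).

Lemma young_gf0 B m : young_gf 0 B m = 1.
Proof. by rewrite /young_gf /= big_cons big_nil /= addr0 expr0. Qed.

Lemma young_gfS h B m : young_gf h.+1 B m =
  1 + \sum_(x < B.+1 | (0 < x <= m)%N) 'X^x * young_gf h B x.
Proof.
rewrite /young_gf big_mkcond big_bseqsS /= expr0; congr (_ + _).
rewrite [RHS]big_mkcond; apply: eq_bigr => x _ /=; rewrite mulr_sumr.
case: (boolP (0 < x <= m)%N) => [/andP[x_gt0 xm] | Hx].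
  rewrite [RHS]big_mkcond; apply: eq_bigr => s _.
  by rewrite young_cons x_gt0 xm andbT /= andbC exprD.
rewrite big1 // => s _; rewrite young_cons /=.
by case: (0 < x)%N Hx => //= /negbTE ->; rewrite andbF.
Qed.

Lemma sum_narrow_pos (R : nmodType) (f : nat -> R) m B : (m <= B)%N ->
  \sum_(x < B.+1 | (0 < x <= m)%N) f x = \sum_(x < m.+1 | (0 < x)%N) f x.
Proof.
move=> mB; have mB1 : (m.+1 <= B.+1)%N by [].
by rewrite (big_ord_narrow_cond (P := fun x : 'I_B.+1 => (0 < x)%N) mB1).
Qed.

Lemma young_gf_widen h B m : (m <= B)%N -> young_gf h B m = young_gf h m m.
Proof.
elim: h B m => [|h IHh] B m mB; first by rewrite !young_gf0.
rewrite !young_gfS (sum_narrow_pos (fun x => 'X^x * young_gf h B x)) //.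
rewrite (sum_narrow_pos (fun x => 'X^x * young_gf h m x)) //.
congr (_ + _); apply: eq_bigr => x _.
have xm : (x <= m)%N by rewrite -ltnS.
by rewrite IHh ?(leq_trans xm) // [in RHS]IHh.
Qed.

Lemma coef_young_gf_succ_rows n h B m : (n <= h)%N ->
  (young_gf h.+1 B m)`_n = (young_gf h B m)`_n.
Proof.
elim: h n m => [|h IHh] n m nh.
  move: nh; rewrite leqn0 => /eqP ->.
  rewrite young_gfS !young_gf0 coefD coef_sum big1 ?addr0 // => x /andP[x_gt0 _].
  by rewrite coefXnM x_gt0.
rewrite young_gfS [in RHS]young_gfS !coefD !coef_sum; congr (_ + _).
apply: eq_bigr => x /andP[x_gt0 _]; rewrite !coefXnM; case: ltnP => // xn.
by rewrite IHh //; lia.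
Qed.

Lemma coef_young_gf_succ_parts n h B m : (n <= B)%N ->
  (young_gf h B.+1 m)`_n = (young_gf h B m)`_n.
Proof.
elim: h n m => [|h IHh] n m nB; first by rewrite !young_gf0.
rewrite !young_gfS !coefD; congr (_ + _).
case: (leqP m B) => mB.
  rewrite (sum_narrow_pos (fun x => 'X^x * young_gf h B.+1 x)) ?(leqW mB) //.
  rewrite (sum_narrow_pos (fun x => 'X^x * young_gf h B x)) // !coef_sum.
  apply: eq_bigr => x _.
  by rewrite !coefXnM; case: ltnP => // xn; rewrite IHh //; lia.
rewrite [in LHS]big_mkcond big_ord_recr /= mB coefD [X in _ + X]coefXnM.
rewrite ifT; last by lia.
rewrite addr0 [in RHS]big_mkcond !coef_sum; apply: eq_bigr => x _ /=.
case: ifP => _; last by rewrite !coef0.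
by rewrite !coefXnM; case: ltnP => // xn; rewrite IHh //; lia.
Qed.

Lemma coef_young_gf_stable n h B m : (n <= h)%N -> (n <= B)%N ->
  (young_gf h B m)`_n = (young_gf n n m)`_n.
Proof.
move=> nh nB.
rewrite (@eq_from_succ _ (fun h => (young_gf h B m)`_n) n) //; last first.
  by move=> k nk; apply: coef_young_gf_succ_rows.
by rewrite (@eq_from_succ _ (fun B => (young_gf n B m)`_n) n) // => k nk;
  apply: coef_young_gf_succ_parts.
Qed.

(* The Gaussian binomial [h + m, m]_q. *)
Definition gauss_binom h m := young_gf h m m.

Lemma gauss_binom0l m : gauss_binom 0 m = 1.
Proof. exact: young_gf0. Qed.

Lemma gauss_binom0r h : gauss_binom h 0 = 1.
Proof.
case: h => [|h]; first exact: young_gf0.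
by rewrite /gauss_binom young_gfS big1 ?addr0 // => -[[|x] ?].
Qed.

Lemma gauss_binomS h m :
  gauss_binom h.+1 m.+1 = gauss_binom h.+1 m + 'X^(m.+1) * gauss_binom h m.+1.
Proof.
rewrite /gauss_binom !young_gfS (sum_narrow_pos (fun x => 'X^x * young_gf h m.+1 x)) //.
rewrite (sum_narrow_pos (fun x => 'X^x * young_gf h m x)) // big_mkcond big_ord_recr /=.
rewrite -addrA; congr (_ + (_ + _)); rewrite [RHS]big_mkcond; apply: eq_bigr => x _ /=.
case: ifP => // _; have xm : (x <= m)%N by rewrite -ltnS.
by rewrite young_gf_widen ?(leqW xm) // [in RHS]young_gf_widen.
Qed.

Lemma coef_gauss_binom_young n h m j : (n <= j)%N -> (j <= h)%N ->
  (gauss_binom h m)`_n = (young_gf j j m)`_n.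
Proof.
move=> nj jh; rewrite /gauss_binom -(young_gf_widen h (leq_addl j m)).
by rewrite !coef_young_gf_stable // ?(leq_trans nj) // leq_addr.
Qed.

Local Notation bipoly := {poly {poly int}}.

(* x^a q^b, with x the outer and q the inner variable. *)
Definition monom (a b : nat) : bipoly := ('X^b)%:P * 'X^a.

Lemma coef_monom a b i : (monom a b)`_i = 'X^b *+ (i == a).
Proof.
rewrite /monom coefMXn coefC; case: (ltngtP i a) => [//|ai|->]; last by rewrite subnn.
by rewrite subn_eq0 leqNgt ai.
Qed.

Lemma coef2_monom a b i k : (monom a b)`_i`_k = ((i == a) && (k == b))%:R.
Proof. by rewrite coef_monom coefMn coefXn; case: (i == a); case: (k == b). Qed.

Lemma monomM a b a' b' : monom a b * monom a' b' = monom (a + a') (b + b').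
Proof. by rewrite /monom mulrACA -polyCM -!exprD. Qed.

Lemma monom00 : monom 0 0 = 1.
Proof. by rewrite /monom !expr0 mulr1. Qed.

Lemma monomX a b n : monom a b ^+ n = monom (a * n) (b * n).
Proof.
elim: n => [|n IHn]; first by rewrite expr0 !muln0 monom00.
by rewrite exprS IHn monomM !mulnS.
Qed.

Lemma prod_monom (I : Type) (s : seq I) (f g c : I -> nat) :
  \prod_(i <- s) (monom (f i) (g i) *+ c i) =
  monom (\sum_(i <- s) f i) (\sum_(i <- s) g i) *+ (\prod_(i <- s) c i).
Proof.
elim: s => [|x s IHs]; first by rewrite !big_nil monom00.
by rewrite !big_cons IHs mulrnAl mulrnAr -mulrnA monomM mulnC.
Qed.

Definition xq_subst (p : bipoly) : bipoly := p \Po monom 1 1.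

Lemma coef_xq_subst p n : (xq_subst p)`_n = p`_n * 'X^n.
Proof.
rewrite /xq_subst coef_comp_poly.
under eq_bigr do rewrite monomX !mul1n coef_monom mulrnAr.
case: (ltnP n (size p)) => [n_lt | n_ge].
  rewrite (bigD1 (Ordinal n_lt)) //= eqxx big1 ?addr0 // => i /eqP ni.
  by case: eqP => // ni'; case: ni; apply: val_inj.
rewrite nth_default // mul0r big1 // => i _.
by case: eqP => // ni; move: (ltn_ord i); rewrite -ni ltnNge n_ge.
Qed.

Lemma xq_substX p n : xq_subst (p ^+ n) = xq_subst p ^+ n.
Proof.
elim: n => [|n IHn]; first by rewrite !expr0 /xq_subst comp_polyC.
by rewrite !exprS -IHn /xq_subst comp_polyM.
Qed.

Lemma xq_subst_monom a b : xq_subst (monom a b) = monom a (b + a).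
Proof.
apply/polyP => i; rewrite coef_xq_subst !coef_monom.
by case: eqP => [->|_]; rewrite ?exprD // !mulr0n mul0r.
Qed.

Lemma coef_xqM p n : (monom 1 1 * p)`_n = if n is n'.+1 then 'X * p`_n' else 0.
Proof. by rewrite /monom expr1 -mulrA coefCM coefXM; case: n; rewrite ?mulr0. Qed.

(* By [qbinom_seriesS] this is prod_(i=1..L) (1 + x q^i). *)
Definition qbinom_series L : bipoly :=
  \poly_(a < L.+1) ('X^(triangle a) * gauss_binom (L - a) a).

Lemma coef_qbinom_series L a : (a <= L)%N ->
  (qbinom_series L)`_a = 'X^(triangle a) * gauss_binom (L - a) a.
Proof. by move=> aL; rewrite coef_poly ltnS aL. Qed.

Lemma qbinom_series0 : qbinom_series 0 = 1.
Proof.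
apply/polyP => -[|n]; rewrite coef_poly coef1 //=.
by rewrite gauss_binom0l mulr1.
Qed.

Lemma qbinom_seriesS L :
  qbinom_series L.+1 = (1 + monom 1 1) * xq_subst (qbinom_series L).
Proof.
apply/polyP => -[|a]; rewrite mulrDl mul1r coefD coef_xqM !coef_xq_subst !coef_poly /=.
  by rewrite !subn0 !gauss_binom0r !expr0 !mulr1 addr0.
rewrite !subSS triangleS (exprD _ (triangle a)) !exprS.
have [aL | La | ->] := ltngtP a L.
- have -> : (a.+1 < L.+2)%N by lia.
  have -> : (a.+1 < L.+1)%N by lia.
  have -> : (a < L.+1)%N by lia.
  have -> : (L - a = (L - a.+1).+1)%N by lia.
  by rewrite gauss_binomS exprS; ring.
- have -> : (a.+1 < L.+2)%N = false by lia.
  have -> : (a.+1 < L.+1)%N = false by lia.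
  have -> : (a < L.+1)%N = false by lia.
  by rewrite mul0r add0r mul0r mulr0.
- by rewrite ltnSn ltnn subnn !gauss_binom0l ltnSn; ring.
Qed.

Definition theta_gf r L : bipoly :=
  \sum_(s <- bseqs L r | last 1%N s != 0%N)
     monom (sumn s) (weighted_sum s) *+ \prod_(x <- s) 'C(r, x).

Lemma theta_gf0 r : theta_gf r 0 = 1.
Proof. by rewrite /theta_gf /= big_cons big_nil /= big_nil addr0 weighted_sum_nil monom00. Qed.

Lemma theta_gfS r L : theta_gf r L.+1 = (1 + monom 1 1) ^+ r * xq_subst (theta_gf r L).
Proof.
pose t s := monom (sumn s) (weighted_sum s) *+ \prod_(x <- s) 'C(r, x).
have -> : (1 + monom 1 1) ^+ r * xq_subst (theta_gf r L) =
    \sum_(x < r.+1) \sum_(s <- bseqs L r | last 1%N s != 0%N) t ((x : nat) :: s).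
  rewrite exprDn big_distrl; apply: eq_bigr => x _ /=.
  rewrite expr1n mul1r monomX !mul1n /xq_subst linear_sum mulr_sumr.
  apply: eq_bigr => s _; rewrite raddfMn /= -/(xq_subst _) xq_subst_monom.
  rewrite mulrnAl mulrnAr -mulrnA monomM /t /= weighted_sum_cons big_cons.
  by rewrite mulnC addnA.
have t_nil : t [::] = 1 by rewrite /t big_nil weighted_sum_nil monom00.
have t_zero : t [:: 0%N] = 1.
  by rewrite /t big_seq1 bin0 weighted_sum_cons weighted_sum_nil monom00.
rewrite (_ : theta_gf r L.+1 = \sum_(s <- bseqs L.+1 r | last 1%N s != 0%N) t s) //.
rewrite big_mkcond big_bseqsS big_ord_recl [RHS]big_ord_recl.
rewrite addrA; congr (_ + _).
  rewrite bseqs_nil !big_cons /= t_nil t_zero add0r; congr (_ + _).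
  rewrite [RHS]big_mkcond; apply: eq_big_seq => -[|y s] // nil_in.
  by case/negP: (nil_notin_behead_bseqs L r).
apply: eq_bigr => i _; rewrite [RHS]big_mkcond; apply: eq_bigr => s _.
by rewrite last_cons_neq0.
Qed.

Lemma theta_gf_qbinom r L : theta_gf r L = qbinom_series L ^+ r.
Proof.
elim: L => [|L IHL]; first by rewrite theta_gf0 qbinom_series0 expr1n.
by rewrite theta_gfS IHL qbinom_seriesS exprMn xq_substX.
Qed.

Lemma Atilde_coef r d j :
  (Atilde r d j)%:R = (theta_gf r (j + tri r d))`_(r * d)`_(j + tri r d).
Proof.
rewrite /Atilde natr_sum (sum_seq_sub (in_Theta r d j)
  (fun s => (\prod_(x <- s) 'C(r, x))%:R)) ?uniq_bseqs // /theta_gf !coef_sum.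
rewrite [RHS]big_mkcond [LHS]big_mkcond; apply: eq_big_seq => s.
rewrite mem_bseqs => /andP[_ s_le]; rewrite /in_Theta s_le /= coefMn coefMn coef2_monom.
rewrite -/(weighted_sum s) [(r * d)%N == _]eq_sym [(j + tri r d)%N == _]eq_sym.
by case: (last 1%N s != 0%N); case: (_ == _); case: (_ == _); rewrite ?mul0rn ?mul1rn.
Qed.

Lemma sum_sqr_diff (R : comNzRingType) r (x : 'I_r -> R) :
  \sum_(a < r) \sum_(b < r) (x a - x b) ^+ 2 =
  2%:R * r%:R * \sum_(a < r) x a ^+ 2 - 2%:R * (\sum_(a < r) x a) ^+ 2.
Proof.
have row a : \sum_(b < r) (x a - x b) ^+ 2 =
    x a ^+ 2 *+ r + \sum_(b < r) x b ^+ 2 - 2%:R * x a * \sum_(b < r) x b.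
  have -> : x a ^+ 2 *+ r = \sum_(b < r) x a ^+ 2 by rewrite sumr_const card_ord.
  rewrite mulr_sumr -big_split -sumrB /=.
  by apply: eq_bigr => b _; ring.
under eq_bigr do rewrite row.
rewrite sumrB big_split /= sumr_const card_ord -mulr_suml -mulr_sumr sumrMnl.
rewrite -(mulr_natr (\sum_(i < r) x i ^+ 2) r) expr2; ring.
Qed.

Lemma mpair_triangle r d (m : 'I_r -> nat) : (0 < r)%N ->
  (\sum_(a < r) m a = r * d)%N ->
  mpair m / 2%:R = (\sum_(a < r) triangle (m a))%:R - (tri r d)%:R.
Proof.
move=> r_gt0 sum_m; set Q := (\sum_(a < r) m a ^ 2)%N.
have -> : mpair m = Q%:R - (r * d * d)%:R.
  rewrite /mpair (sum_sqr_diff (fun a => (m a)%:R)) -natr_sum sum_m /Q natr_sum.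
  under [in RHS]eq_bigr do rewrite natrX.
  have r_neq0 : (r%:R : rat) != 0 by rewrite pnatr_eq0 -lt0n.
  by rewrite !natrM; field.
have sumT : (\sum_(a < r) triangle (m a))%:R * 2%:R = Q%:R + (r * d)%:R :> rat.
  rewrite -natrM -natrD big_distrl /= -sum_m /Q -big_split /=; congr _%:R.
  by apply: eq_bigr => a _; rewrite triangle_double; lia.
have triT : (tri r d)%:R * 2%:R = (r * d * d)%:R + (r * d)%:R :> rat.
  by rewrite -natrM -natrD tri_triangle -mulnA triangle_double; congr _%:R; lia.
move: sumT triT; move: (\sum_(a < r) triangle (m a))%:R (tri r d)%:R => t tr.
by move: (Q%:R : rat) ((r * d * d)%:R : rat) ((r * d)%:R : rat) => q rdd rd; lra.
Qed.

Lemma A_weight_eq r d j (m : 'I_r -> nat) S : (0 < r)%N ->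
  (\sum_(a < r) m a = r * d)%N ->
  (S%:R + mpair m / 2%:R == j%:R :> rat) =
  (S + \sum_(a < r) triangle (m a) == j + tri r d)%N.
Proof.
move=> r_gt0 sum_m; rewrite (mpair_triangle r_gt0 sum_m) addrA subr_eq -!natrD.
by rewrite eqr_nat.
Qed.

Definition pair_gf r d j : bipoly :=
  \sum_(m : 'I_(r * d).+1) \sum_(Y : seq_sub (bseqs j j))
     monom m (triangle m + ysize (val Y)) *+ (young (val Y) && (ncols (val Y) <= m)%N).

Lemma coef_pair_gf r d j a : (a <= r * d)%N ->
  (pair_gf r d j)`_a = 'X^(triangle a) * young_gf j j a.
Proof.
move=> a_le; rewrite /pair_gf coef_sum (bigD1 (Ordinal (a_le : a < (r * d).+1)%N)) //=.
rewrite [X in _ + X]big1 ?addr0 => [|m /eqP m_neq]; last first.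
  rewrite coef_sum big1 // => Y _; rewrite coefMn coef_monom.
  have -> : (a == m) = false by apply/eqP => a_m; apply: m_neq; apply: val_inj.
  by rewrite mul0rn.
rewrite coef_sum (sum_seq_sub xpredT
  (fun Y => (monom a (triangle a + ysize Y) *+ (young Y && (ncols Y <= a)%N))`_a)) ?uniq_bseqs //.
rewrite /young_gf mulr_sumr [RHS]big_mkcond; apply: eq_bigr => Y _.
by rewrite coefMn coef_monom eqxx mulr1n exprD; case: (_ && _).
Qed.

Lemma prod_nat_of_bool r (b : 'I_r -> bool) : (\prod_(a < r) b a)%N = [forall a, b a].
Proof.
case: (boolP [forall a, b a]) => [/forallP b_all | /forallPn [a /negbTE b_a]].
  by rewrite big1 // => a _; rewrite b_all.
by rewrite (bigD1 a) //= b_a mul0n.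
Qed.

Lemma A_coef r d j : (0 < r)%N ->
  (A r d j)%:R = (pair_gf r d j ^+ r)`_(r * d)`_(j + tri r d).
Proof.
move=> r_gt0.
have -> : pair_gf r d j ^+ r = \prod_(a < r) pair_gf r d j by rewrite prodr_const card_ord.
rewrite /pair_gf bigA_distr_bigA /=.
under eq_bigr do rewrite bigA_distr_bigA /=.
rewrite /A -sum1_card natr_sum big_mkcond /= (_ : \sum_i _ =
    \sum_(fm : {ffun 'I_r -> 'I_(r * d).+1}) \sum_(fY : {ffun 'I_r -> seq_sub (bseqs j j)})
      (A_pred d j (fun a => fm a : nat) (fun a => val (fY a)))%:R); last first.
  by rewrite pair_bigA; apply: eq_bigr => p _; rewrite inE; case: A_pred.
rewrite !coef_sum; apply: eq_bigr => fm _; rewrite !coef_sum; apply: eq_bigr => fY _.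
rewrite prod_monom coefMn coefMn coef2_monom prod_nat_of_bool /A_pred /=.
rewrite eq_sym [(j + tri r d)%N == _]eq_sym big_split /=.
have [sum_m | ] := eqVneq (\sum_(a < r) fm a)%N (r * d); last by rewrite mul0rn.
rewrite (A_weight_eq _ _ r_gt0 sum_m) addnC.
by case: [forall a, _]; case: (_ == _).
Qed.

Section WeightedOrder.

Variables D d : nat.

Definition wval_ge (W : bipoly) (K : int) :=
  forall a b : nat, (a <= D)%N -> b%:Z - (d * a)%:Z < K -> W`_a`_b = 0.

Lemma wval_ge_le W K K' : K' <= K -> wval_ge W K -> wval_ge W K'.
Proof. by move=> KK' WK a b aD bK; apply: WK => //; apply: lt_le_trans bK KK'. Qed.

Lemma wval_ge1 : wval_ge 1 0.
Proof.
move=> a b _; rewrite coef1; case: a => [|a] /=; last by rewrite coef0.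
by rewrite coef1 muln0; case: b.
Qed.

Lemma wval_geD U V K : wval_ge U K -> wval_ge V K -> wval_ge (U + V) K.
Proof. by move=> UK VK a b aD bK; rewrite !coefD UK ?VK ?addr0. Qed.

Lemma wval_ge_sum (I : Type) (s : seq I) (F : I -> bipoly) K :
  (forall i, wval_ge (F i) K) -> wval_ge (\sum_(i <- s) F i) K.
Proof.
move=> FK; elim: s => [|i s IHs]; last by rewrite big_cons; apply: wval_geD.
by move=> a b _ _; rewrite big_nil !coef0.
Qed.

Lemma wval_geM U V K1 K2 : wval_ge U K1 -> wval_ge V K2 -> wval_ge (U * V) (K1 + K2).
Proof.
move=> UK VK a b aD bK; rewrite coefM coef_sum big1 // => i _.
rewrite coefM big1 // => k _.
have ia : (i <= a)%N by rewrite -ltnS.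
have kb : (k <= b)%N by rewrite -ltnS.
have [kK | Kk] := ltP (k%:Z - (d * i)%:Z) K1.
  by rewrite UK ?mul0r // (leq_trans ia).
rewrite (VK (a - i)%N (b - k)%N) ?mulr0 ?(leq_trans (leq_subr _ _)) //.
have di : (d * i <= d * a)%N by rewrite leq_mul2l ia orbT.
by move: bK Kk; rewrite mulnBr; move: (d * i)%N (d * a)%N di => x y; lia.
Qed.

Lemma wval_geX U K n : wval_ge U K -> wval_ge (U ^+ n) (n%:Z * K).
Proof.
move=> UK; elim: n => [|n IHn]; first by rewrite expr0 mul0r; apply: wval_ge1.
by rewrite exprS intS mulrDl mul1r; apply: wval_geM.
Qed.

Lemma wval_ge_subrXX U V K K' n : wval_ge U K -> wval_ge V K -> wval_ge (U - V) K' ->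
  wval_ge (U ^+ n.+1 - V ^+ n.+1) (K' + n%:Z * K).
Proof.
move=> UK VK UVK; rewrite subrXX; apply: wval_geM => //.
apply: wval_ge_sum => i; apply: (@wval_ge_le _ ((n - i)%:Z * K + i%:Z * K)).
  by rewrite -mulrDl -PoszD subnK // -ltnS.
by apply: wval_geM; apply: wval_geX.
Qed.

End WeightedOrder.

Lemma wval_ge_triangle D d (W : bipoly) :
  (forall a b : nat, (a <= D)%N -> (b < triangle a)%N -> W`_a`_b = 0) ->
  wval_ge D d W ((triangle d)%:Z - (d * d)%:Z).
Proof.
move=> W0 a b aD bK; apply: W0 => //.
by move: (triangle_convex a d) bK; move: (triangle d) (triangle a) (d * a)%N (d * d)%N; lia.
Qed.

Lemma wval_ge_qbinom_series D d L :
  wval_ge D d (qbinom_series L) ((triangle d)%:Z - (d * d)%:Z).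
Proof.
apply: wval_ge_triangle => a b _ b_lt; rewrite coef_poly.
by case: ifP => _; rewrite ?coefXnM ?b_lt ?coef0.
Qed.

Lemma wval_ge_pair_gf r d j :
  wval_ge (r * d) d (pair_gf r d j) ((triangle d)%:Z - (d * d)%:Z).
Proof. by apply: wval_ge_triangle => a b a_le b_lt; rewrite coef_pair_gf // coefXnM b_lt. Qed.

Lemma wval_ge_qbinom_series_sub_pair_gf r d j :
  wval_ge (r * d) d (qbinom_series (j + tri r d) - pair_gf r d j)
    ((triangle d)%:Z - (d * d)%:Z + j%:Z + 1).
Proof.
move=> a b a_le bK.
have a_tri : (a <= tri r d)%N.
  by rewrite tri_triangle (leq_trans a_le) // leq_mul2l leq_triangle orbT.
rewrite coefB coef_qbinom_series ?(leq_trans a_tri) ?leq_addl // coef_pair_gf //.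
rewrite -mulrBr coefXnM; case: ltnP => // Ta_le.
rewrite coefB (@coef_gauss_binom_young _ _ _ j) ?subrr //; last by lia.
by move: (triangle_convex a d) bK Ta_le; move: (triangle d) (triangle a) (d * a)%N (d * d)%N; lia.
Qed.

Local Close Scope ring_scope.

Theorem lemma5p3 (r d j : nat) : 0 < r -> Atilde r d j = A r d j.
Proof.
case: r => [//|r] _; apply/eqP; rewrite -(eqr_nat int) Atilde_coef A_coef //.
rewrite theta_gf_qbinom -subr_eq0 -!coefB; apply/eqP.
apply: (wval_ge_subrXX (n := r) (@wval_ge_qbinom_series _ _ _) (@wval_ge_pair_gf _ _ _)
  (@wval_ge_qbinom_series_sub_pair_gf _ _ _)) => //.
rewrite tri_triangle; nia.
Qed.
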